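(* Let $G\leq\operatorname{Homeo}(\mathfrak{C})$ be approximately full. Then $G$ is flexible if and only if $G$ is vigorous.
   Context: $\mathfrak{C}$ denotes a Cantor space (a space homeomorphic to $\{0,1\}^\omega$). Groups of homeomorphisms act on the right. $K_{\mathfrak{C}}$ denotes the set of non-empty proper clopen subsets of $\mathfrak{C}$. For $\gamma\in\operatorname{Homeo}(\mathfrak{C})$, $\operatorname{supp}(\gamma)=\{p\in\mathfrak{C}: p\gamma\neq p\}$. A subset $S\subseteq \operatorname{Homeo}(\mathfrak{C})$ is vigorous if for all clopen $A,B,C\subseteq\mathfrak{C}$ with $B,C$ non-empty proper subsets of $A$ there is $\gamma\in S$ with $\operatorname{supp}(\gamma)\subseteq A$ and $B\gamma\subseteq C$. $G$ is flexible if for all $U,V\in K_{\mathfrak{C}}$ there is $\gamma\in G$ with $U\gamma\subseteq V$. $G$ is approximately full if whenever $\Gamma\subseteq G$ is finite, $\{D_\gamma\}_{\gamma\in\Gamma}$ is a partition of $\mathfrak{C}$ into clopen sets such that $\{D_\gamma\gamma\}_{\gamma\in\Gamma}$ is also a partition of $\mathfrak{C}$, and $\delta\in\Gamma$, there exists $\chi\in G$ with $\chi|_{D_\gamma}=\gamma|_{D_\gamma}$ for every $\gamma\in\Gamma\setminus\{\delta\}$. *)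

From HB Require Import structures.
From mathcomp Require Import all_boot all_order all_algebra.
From mathcomp Require Import all_classical all_reals topology cantor.
Set Implicit Arguments.
Unset Strict Implicit.
Unset Printing Implicit Defensive.
Local Open Scope classical_set_scope.

Notation C := cantor_space.

Definition is_homeo (f : C -> C) : Prop :=
  continuous f /\ exists g : C -> C, [/\ continuous g, cancel f g & cancel g f].

Definition homeo_subgroup (G : set (C -> C)) : Prop :=
  [/\ forall f, G f -> is_homeo f,
      G id,
      forall f g, G f -> G g -> G (f \o g) &
      forall f, G f -> exists2 g, G g & (cancel f g /\ cancel g f)].

Definition supp (f : C -> C) : set C := [set p | f p <> p].

Definition K_C (U : set C) : Prop := clopen U /\ U !=set0 /\ U != setT.

(* Right action: B gamma is the image f @` B. *)
Definition vigorous (S : set (C -> C)) : Prop :=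
  forall A B D : set C, clopen A -> clopen B -> clopen D ->
    B !=set0 -> B `<=` A -> B != A ->
    D !=set0 -> D `<=` A -> D != A ->
    exists2 g, S g & (supp g `<=` A /\ g @` B `<=` D).

Definition flexible (G : set (C -> C)) : Prop :=
  forall U V, K_C U -> K_C V -> exists2 g, G g & g @` U `<=` V.

Definition clopen_partition (I : finType) (D : I -> set C) : Prop :=
  [/\ forall i, clopen (D i),
      forall i, D i !=set0,
      forall i j, i != j -> D i `&` D j = set0 &
      \bigcup_(i in [set: I]) D i = setT].

(* Approximately full: a finite Gamma ⊆ G is encoded as an injective
   family gam : I -> (C -> C) indexed by a finite type I. *)
Definition approximately_full (G : set (C -> C)) : Prop :=
  forall (I : finType) (gam : I -> C -> C) (D : I -> set C),
    injective gam -> (forall i, G (gam i)) ->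
    clopen_partition D -> clopen_partition (fun i => gam i @` D i) ->
    forall d : I, exists2 chi, G chi &
      (forall i, i != d -> forall x, D i x -> chi x = gam i x).

From mathcomp Require Import all_boot all_classical topology cantor.

(* Vigorous implies flexible for any set of homeomorphisms: take A = C.

   For the converse, the key construction is a "transposition": if P and V are
   disjoint non-empty clopen sets whose union misses a point, flexibility gives
   f in G with f(P u V) inside V.  Approximate fullness, applied to the
   three-block partition {P, f(P), rest} with the elements f, f^-1, id and the
   element f^-1 deleted, yields chi in G which agrees with f on P and is the
   identity off P u f(P); so chi is supported in P u V and moves P into V.
   Given clopen B, D properly inside a proper clopen A, one transposition moves
   B into D when they are disjoint; otherwise one first moves B into A \ B and
   then A \ B into D n B.  The case A = C is flexibility itself. *)

Local Open Scope classical_set_scope.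

Definition triple {T : Type} (X0 X1 X2 : T) (i : 'I_3) : T :=
  if val i == 0%N then X0 else if val i == 1%N then X1 else X2.

Lemma clopen_partition3 (X0 X1 X2 : set C) :
  clopen X0 -> clopen X1 -> clopen X2 ->
  X0 !=set0 -> X1 !=set0 -> X2 !=set0 ->
  X0 `&` X1 = set0 -> X0 `&` X2 = set0 -> X1 `&` X2 = set0 ->
  (forall x, [\/ X0 x, X1 x | X2 x]) ->
  clopen_partition (triple X0 X1 X2).
Proof.
move=> c0 c1 c2 n0 n1 n2 d01 d02 d12 cover; split.
- by move=> [[|[|[|?]]] ?].
- by move=> [[|[|[|?]]] ?].
- by move=> [[|[|[|i]]] hi] // [[|[|[|j]]] hj] // _; rewrite /triple //= setIC.
- apply/seteqP; split => x // _.
  by case: (cover x) => h; [exists (@Ordinal 3 0 isT)|exists (@Ordinal 3 1 isT)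
                           |exists (@Ordinal 3 2 isT)].
Qed.

Lemma K_C_avoiding {U : set C} {z : C} : clopen U -> U !=set0 -> ~ U z -> K_C U.
Proof.
by move=> cU nU Uz; split => //; split => //; apply/eqP => UT; apply: Uz; rewrite UT.
Qed.

Lemma supp_comp (f g : C -> C) : supp (g \o f) `<=` supp f `|` supp g.
Proof.
move=> x; rewrite /supp /= => gfx; have [fx|] := pselect (f x = x); last by left.
by right; rewrite fx in gfx.
Qed.

Lemma vigorous_flexible (S : set (C -> C)) : vigorous S -> flexible S.
Proof.
move=> vigS U V [cU [nU UT]] [cV [nV VT]].
by have [g Sg [_ gUV]] := vigS setT U V clopenT cU cV nU (subsetT U) UT
                                 nV (subsetT V) VT; exists g.
Qed.

Section ApproximatelyFull.
Variable G : set (C -> C).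
Hypothesis groupG : homeo_subgroup G.
Hypothesis fullG : approximately_full G.

(* Approximate fullness extends the restriction of f to a clopen P with
   f(P) disjoint from P to an element of G supported in P u f(P): patch
   f, f^-1, id on P, f(P), C \ (P u f(P)) and drop the piece of f^-1.
   The condition f <> fi makes these three elements distinct. *)
Lemma extend_translation (f fi : C -> C) (P : set C) (z : C) :
  G f -> G fi -> cancel f fi -> cancel fi f -> f <> fi ->
  clopen P -> P !=set0 -> P `&` f @` P = set0 -> ~ P z -> ~ (f @` P) z ->
  exists2 chi, G chi &
    supp chi `<=` P `|` f @` P /\ (forall x, P x -> chi x = f x).
Proof.
move=> Gf Gfi ffi fif f_fi cP nP dPQ Pz Qz; have [p0 Pp0] := nP.
have [homeo _ _ _] := groupG; have [cfi _] := homeo fi Gfi.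
set Q := f @` P; set R := ~` (P `|` Q).
have QE : Q = fi @^-1` P.
  apply/seteqP; split => y /=; first by case=> x Px <-; rewrite ffi.
  by move=> Py; exists (fi y); rewrite ?fif.
have cQ : clopen Q by rewrite QE; exact: preimage_clopen.
have cR : clopen R by apply: (@clopenC _ _ set0); exact: clopenU.
have nQ : Q !=set0 by exists (f p0), p0.
have f_id : f <> id.
  move=> fE; suff : (P `&` Q) p0 by rewrite dPQ.
  by split => //; exists p0; rewrite ?fE.
have fi_id : fi <> id.
  by move=> fiE; apply: f_id; apply: funext => x; rewrite -[in RHS](ffi x) fiE.
have nR : R !=set0 by exists z => -[].
have trichotomy x : [\/ P x, Q x | R x].
  by have [|notP] := pselect (P x); [constructor 1|have [|notQ] := pselect (Q x);
     [constructor 2|constructor 3 => -[]]].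
have partD : clopen_partition (triple P Q R).
  by apply: clopen_partition3 => //; apply/disjoints_subset => y Qy [];
    [left|right].
have imageE : (fun i => triple f fi id i @` triple P Q R i) = triple Q P R.
  apply: funext => -[[|[|[|i]]] hi] //; rewrite /triple /=.
  - apply/seteqP; split => y /=; first by case=> x [x' Px' <-] <-; rewrite ffi.
    by move=> Py; exists (f y); [exists y|rewrite ffi].
  - exact: image_id.
have partI : clopen_partition (fun i => triple f fi id i @` triple P Q R i).
  rewrite imageE; apply: clopen_partition3 => //; first by rewrite setIC.
  - by apply/disjoints_subset => y Qy []; right.
  - by apply/disjoints_subset => y Py []; left.
  - by move=> x; case: (trichotomy x); constructor.
have triple_inj : injective (triple f fi id).
  by move=> [[|[|[|i]]] hi] // [[|[|[|j]]] hj] //; rewrite /triple /= => E;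
    first [exact: val_inj | exfalso; congruence].
have Gtriple i : G (triple f fi id i).
  by case: i => -[|[|[|i]]] hi //; rewrite /triple; case: groupG.
(* The element whose piece is dropped is f^-1, at index 1. *)
have [chi Gchi chiE] :=
  fullG _ _ _ triple_inj Gtriple partD partI (@Ordinal 3 1 isT).
exists chi => //; split => [x chix|x Px]; last exact: (chiE (@Ordinal 3 0 isT)).
case: (trichotomy x) => [Px|Qx|Rx]; [by left|by right|].
by case: chix; apply: (chiE (@Ordinal 3 2 isT)).
Qed.

Hypothesis flexG : flexible G.

Lemma flexible_transposition (P V : set C) (z : C) :
  clopen P -> clopen V -> P !=set0 -> V !=set0 -> P `&` V = set0 ->
  ~ P z -> ~ V z ->
  exists2 chi, G chi & supp chi `<=` P `|` V /\ chi @` P `<=` V.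
Proof.
move=> cP cV [p0 Pp0] nV dPV Pz Vz.
have PV x : P x -> V x -> False.
  by move=> Px Vx; have : (P `&` V) x by []; rewrite dPV.
have [f Gf fPV] : exists2 f, G f & f @` (P `|` V) `<=` V.
  have PVz : ~ (P `|` V) z by case.
  have nPV : (P `|` V) !=set0 by exists p0; left.
  exact: flexG (K_C_avoiding (clopenU cP cV) nPV PVz) (K_C_avoiding cV nV Vz).
have fV x : P x \/ V x -> V (f x) by move=> hx; apply: fPV; exists x.
have [_ _ _ inv] := groupG; have [fi Gfi [ffi fif]] := inv f Gf.
have f_fi : f <> fi.
  move=> E; apply: (PV p0) => //; rewrite -[p0](ffi p0) -E.
  by apply: (fV); right; apply: (fV); left.
have fPV' : f @` P `<=` V by move=> _ [x Px <-]; apply: fV; left.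
have nP : P !=set0 by exists p0.
have dPQ : P `&` f @` P = set0.
  by apply/disjoints_subset => y Py /fPV'; apply: PV.
have Qz : ~ (f @` P) z by move/fPV'.
have [chi Gchi [suppchi chiP]] :=
  @extend_translation f fi P z Gf Gfi ffi fif f_fi cP nP dPQ Pz Qz.
exists chi => //; split => [x /suppchi[Px|/fPV' Vx]|_ [x Px <-]].
- by left.
- by right.
- by rewrite chiP //; apply: fV; left.
Qed.

Lemma flexible_vigorous_proper (A B D : set C) (z : C) :
  ~ A z -> clopen A -> clopen B -> clopen D ->
  B !=set0 -> B `<=` A -> B != A -> D !=set0 -> D `<=` A ->
  exists2 g, G g & supp g `<=` A /\ g @` B `<=` D.
Proof.
move=> Az cA cB cD nB BA neBA nD DA.
have Bz : ~ B z by move/BA.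
have [BD0|BD_nonempty] := pselect (B `&` D = set0).
  have [chi Gchi [suppchi chiBD]] :=
    @flexible_transposition B D z cB cD nB nD BD0 Bz (fun Dz => Az (DA z Dz)).
  by exists chi => //; split => // x /suppchi[/BA|/DA].
pose X := A `&` ~` B.
have cX : clopen X by apply: clopenI => //; exact: (@clopenC _ _ set0).
have nX : X !=set0.
  apply: nonsubset => AB; move/negP: neBA; apply; apply/eqP/seteqP; by split.
have nDB : (D `&` B) !=set0 by apply/set0P/eqP; rewrite setIC.
have [chi1 G1 [supp1 moveBX]] : exists2 chi1, G chi1 &
    supp chi1 `<=` B `|` X /\ chi1 @` B `<=` X.
  apply: (@flexible_transposition _ _ z) => //; last by move=> [/Az].
  by apply/disjoints_subset => x Bx [].
have [chi2 G2 [supp2 moveXDB]] : exists2 chi2, G chi2 &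
    supp chi2 `<=` X `|` (D `&` B) /\ chi2 @` X `<=` D `&` B.
  apply: (@flexible_transposition _ _ z) => //.
  - exact: clopenI.
  - by apply/disjoints_subset => x [_ nBx] [_ Bx].
  - by move=> [/Az].
  - by move=> [/DA/Az].
exists (chi2 \o chi1); first by case: groupG => _ _ Gcomp _; exact: Gcomp.
split=> [x /supp_comp[/supp1|/supp2]|_ [x Bx <-]].
- by case=> [/BA|[]].
- by case=> [[]|[/DA]].
- have Xchi1x : X (chi1 x) by apply: moveBX; exists x.
  by have [] : (D `&` B) (chi2 (chi1 x)) by apply: moveXDB; exists (chi1 x).
Qed.

End ApproximatelyFull.

Theorem lemma2p14 (G : set (cantor_space -> cantor_space)) :
  homeo_subgroup G -> approximately_full G -> (flexible G <-> vigorous G).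
Proof.
move=> groupG fullG; split; last exact: vigorous_flexible.
move=> flexG A B D cA cB cD nB BA neBA nD DA neDA.
case: (eqVneq A setT) => [AT|/setTPn[z Az]].
-
  rewrite {}AT in neBA neDA *.
  have [g Gg gBD] := flexG B D (conj cB (conj nB neBA)) (conj cD (conj nD neDA)).
  by exists g => //; split.
- exact: (@flexible_vigorous_proper G groupG fullG flexG _ _ _ _ Az).
Qed.
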